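(* Consider a LAWS system with base model $F_W$, library $\mathcal L$, threshold $N_{\min}$, and the any-match inference rule, updated by the LAWS update protocol. Let $H_n$ be the expected LAWS cache hit rate after $n$ deployment queries drawn i.i.d. from $P_{\mathcal M}$. Then $H_n$ is non-decreasing in $n$: \[ H_1 \le H_2 \le \cdots \le H_n \le \cdots \le 1 . \]
   Context: $V$ is a finite vocabulary, $P_{\mathcal M}$ a distribution (generative model) over $V^*$, and $d_{\mathcal T}(s,s') = -\log_2 P_{\mathcal M}(s\wedge s')$ the trie metric ($s\wedge s'$ the longest common prefix). A parametrized expert is $e=(n^*,f,\phi,\tau^*,\varepsilon_{\mathrm{fit}})$ with signpost $n^*$, parameter extractor $\phi: V^*\to\mathbb{R}^k$, expert function $f:\mathbb{R}^k\to\mathbb{R}^{|V|}$, routing radius $\tau^*>0$ and fitting error $\varepsilon_{\mathrm{fit}}$; its routing ball is $\mathcal B(n^*,\tau^* ) = \{x : d_{\mathcal T}(x,n^* )\le\tau^*\}$. Any-match inference: a query $x$ is a cache hit (answered by $f_{e^*}(\phi_{e^*}(x))$ for the matching expert $e^*$ of smallest trie distance) whenever some expert's routing ball in $\mathcal L$ contains $x$; otherwise (cache miss) the base model $F_W(x)$ is run. LAWS update protocol: after computing $y=F_W(x)$, the observation is inserted into the trie, incrementing the count of the corresponding node $n$; if the count of $n$ reaches $N_{\min}$, an expert with signpost $n$ (fitted function, extractor, routing radius, fitting error) is added to $\mathcal L$. Experts are never removed. The hit rate is the probability that a fresh query from $P_{\mathcal M}$ is a cache hit. *)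

From Stdlib Require List.
From HB Require Import structures.
From mathcomp Require Import all_boot all_order all_algebra.
From mathcomp Require Import all_classical all_reals all_analysis.
Set Implicit Arguments. Unset Strict Implicit. Unset Printing Implicit Defensive.
Import Order.TTheory GRing.Theory Num.Theory.
Local Open Scope ring_scope.
Local Open Scope classical_set_scope.

Section LAWS.
Variables (V : finType) (R : realType).

Definition is_distr (P : seq V -> R) : Prop :=
  (forall s, 0 <= P s) /\ (\esum_(s in [set: seq V]) (P s)%:E = 1%E).

Fixpoint lcp (s s' : seq V) : seq V :=
  match s, s' with
  | a :: t, b :: t' => if a == b then a :: lcp t t' else [::]
  | _, _ => [::]
  end.

(* P_M(u) for a trie node (prefix) u : mass of all strings starting with u *)
Definition pref_mass (P : seq V -> R) (u : seq V) : \bar R :=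
  \esum_(t in [set t | prefix u t]) (P t)%:E.

Definition trie_dist (P : seq V -> R) (s s' : seq V) : \bar R :=
  let m := fine (pref_mass P (lcp s s')) in
  if 0 < m then (- (ln m / ln 2))%:E else +oo%E.

(* parametrized expert e = (n_star, f, phi, tau_star, eps_fit) *)
Record expert := Expert {
  signpost : seq V;
  edim : nat;
  ephi : seq V -> 'rV[R]_edim;
  efun : 'rV[R]_edim -> 'rV[R]_#|V|;
  etau : R;
  eps_fit : R }.

Definition in_ball (P : seq V -> R) (e : expert) (x : seq V) : Prop :=
  (trie_dist P x (signpost e) <= (etau e)%:E)%E.

Definition cache_hit (P : seq V -> R) (L : seq expert) (x : seq V) : Prop :=
  exists e, List.In e L /\ in_ball P e x.

Definition hit_rate (P : seq V -> R) (L : seq expert) : \bar R :=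
  \esum_(x in [set x | cache_hit P L x]) (P x)%:E.

(* F_W : base model; nodeOf x : trie node whose count is incremented by x;
   fit n obs : expert fitted at signpost n from the observations obs so far;
   update_on_hits : whether F_W is also run (and the observation inserted)
   on cache hits (true) or only on cache misses (false).
   State = (library, observations inserted so far). *)
Definition laws_step (P : seq V -> R) (FW : seq V -> 'rV[R]_#|V|)
    (nodeOf : seq V -> seq V) (Nmin : nat)
    (fit : seq V -> seq (seq V * 'rV[R]_#|V|) -> expert)
    (update_on_hits : bool)
    (st : seq expert * seq (seq V * 'rV[R]_#|V|)) (x : seq V)
    : seq expert * seq (seq V * 'rV[R]_#|V|) :=
  let: (L, obs) := st in
  if update_on_hits || ~~ `[< cache_hit P L x >] then
    let obs' := rcons obs (x, FW x) in
    let n := nodeOf x in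
    let cnt := count (fun o => nodeOf o.1 == n) obs' in
    if cnt == Nmin then (rcons L (fit n obs'), obs') else (L, obs')
  else (L, obs).

Definition laws_library P FW nodeOf Nmin fit update_on_hits
    (L0 : seq expert) (s : seq (seq V)) : seq expert :=
  (foldl (laws_step P FW nodeOf Nmin fit update_on_hits) (L0, [::]) s).1.

(* expectation of g(q_1,...,q_n) for q_1..q_n i.i.d. ~ P (iterated sums) *)
Fixpoint iid_expect (P : seq V -> R) (n : nat)
    (g : seq (seq V) -> \bar R) : \bar R :=
  match n with
  | 0 => g [::]
  | n'.+1 => \esum_(x in [set: seq V])
               ((P x)%:E * iid_expect P n' (fun s => g (x :: s)))%E
  end.

Definition expected_hit_rate P FW nodeOf Nmin fit update_on_hits L0 n : \bar R :=
  iid_expect P n (fun s =>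
    hit_rate P (laws_library P FW nodeOf Nmin fit update_on_hits L0 s)).

End LAWS.

(** Experts are never removed, so the library reached after the queries [s]
    is contained in the one reached after [rcons s x], and the hit rate is
    monotone in the library.  [H_(n+1)] averages over one more independent
    query than [H_n]; since the query distribution has total mass 1, averaging
    the larger hit rate over that last query still dominates [H_n].  A hit
    rate is the mass of a set of queries, hence at most 1. *)

From Stdlib Require List.
From HB Require Import structures.
From mathcomp Require Import all_boot all_order all_algebra.
From mathcomp Require Import all_classical all_reals all_analysis.
Import Order.TTheory GRing.Theory Num.Theory.
Local Open Scope ring_scope.
Local Open Scope classical_set_scope.
Local Open Scope ereal_scope.

Lemma subset_esum (R : realType) (T : choiceType) (A B : set T) (a : T -> \bar R) :
  A `<=` B -> \esum_(i in A) a i <= \esum_(i in B) a i.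
Proof.
move=> AB; apply: ge_ereal_sup => _ [X [finX XA] <-]; apply: esum_ge.
by exists X => //; split => //; apply: subset_trans AB.
Qed.

Lemma ge0_esumZl (R : realType) (T : choiceType) (S : set T) (a : T -> \bar R) (r : R) :
  (0 <= r)%R -> (forall x, 0 <= a x) ->
  \esum_(i in S) (r%:E * a i) = r%:E * \esum_(i in S) a i.
Proof.
move=> r0 a0; rewrite /esum -ereal_supZl //; last first.
  by apply/set0P; exists 0; exists set0; [exact: fsets_set0 | rewrite fsbig_set0].
congr ereal_sup; apply/seteqP; split => y /=.
  by move=> [X HX <-]; exists (\sum_(i \in X) a i); [exists X | rewrite ge0_mule_fsumr].
by move=> [z [X HX <-] <-]; exists X => //; rewrite ge0_mule_fsumr.
Qed.

Section IidExpectation.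
Variables (V : finType) (R : realType) (P : seq V -> R).
Hypothesis P_ge0 : forall x, (0 <= P x)%R.
Hypothesis P_sum1 : \esum_(x in [set: seq V]) (P x)%:E = 1.

Lemma expect_ge_const (r : R) (a : seq V -> \bar R) :
  (0 <= r)%R -> (forall x, r%:E <= a x) ->
  r%:E <= \esum_(x in [set: seq V]) ((P x)%:E * a x).
Proof.
move=> r0 ra.
have P_ge0E x : 0 <= (P x)%:E by rewrite lee_fin.
rewrite -[leLHS]mule1 -P_sum1 -ge0_esumZl //.
by apply: le_esum => x _; rewrite muleC lee_wpmul2l.
Qed.

Lemma iid_expect_ge0 n (g : seq (seq V) -> \bar R) :
  (forall s, 0 <= g s) -> 0 <= iid_expect P n g.
Proof.
elim: n g => [|n IH] g g0 //=.
by apply: esum_ge0 => x _; rewrite mule_ge0 ?lee_fin ?IH.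
Qed.

Lemma iid_expect_le1 n (g : seq (seq V) -> \bar R) :
  (forall s, 0 <= g s <= 1) -> iid_expect P n g <= 1.
Proof.
elim: n g => [|n IH] g g01 /=; first by case/andP: (g01 [::]).
rewrite -P_sum1; apply: le_esum => x _.
rewrite -[leRHS]mule1 lee_pmul ?lee_fin ?IH //.
by apply: iid_expect_ge0 => s; case/andP: (g01 (x :: s)).
Qed.

Lemma iid_expect_le_append n (g h : seq (seq V) -> \bar R) :
  (forall s, 0 <= h s <= 1) -> (forall s x, h s <= g (rcons s x)) ->
  iid_expect P n h <= iid_expect P n.+1 g.
Proof.
elim: n g h => [|n IH] g h h01 hg.
  have /andP[h0 h1] := h01 [::].
  have h_fin : h [::] = (fine (h [::]))%:E.
    by rewrite fineK // ge0_fin_numE // (le_lt_trans h1) ?ltry.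
  rewrite /= h_fin; apply: expect_ge_const; first by rewrite -lee_fin -h_fin.
  by move=> x; rewrite -h_fin; apply: (hg [::] x).
rewrite [iid_expect P n.+1 h]/= [iid_expect P n.+2 g]/=.
apply: le_esum => x _; apply: lee_pmul; rewrite ?lee_fin //.
  by apply: iid_expect_ge0 => s; case/andP: (h01 (x :: s)).
by apply: (IH (fun s => g (x :: s)) (fun s => h (x :: s))) => [s | s y];
  [apply: h01 | apply: hg].
Qed.

End IidExpectation.

Section HitRate.
Variables (V : finType) (R : realType) (P : seq V -> R).

Lemma hit_rate_ge0 (L : seq (expert V R)) :
  (forall x, (0 <= P x)%R) -> 0 <= hit_rate P L.
Proof. by move=> P0; apply: esum_ge0 => x _; rewrite lee_fin. Qed.

Lemma hit_rate_le1 (L : seq (expert V R)) : is_distr P -> hit_rate P L <= 1.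
Proof. by move=> [_ <-]; apply: subset_esum. Qed.

Lemma le_hit_rate (L L' : seq (expert V R)) :
  (forall e, List.In e L -> List.In e L') -> hit_rate P L <= hit_rate P L'.
Proof. by move=> LL'; apply: subset_esum => x [e [/LL' Le hx]]; exists e. Qed.

End HitRate.

Lemma laws_library_rcons (V : finType) (R : realType) P FW nodeOf Nmin fit
    update_on_hits (L0 : seq (expert V R)) s x e :
  List.In e (laws_library P FW nodeOf Nmin fit update_on_hits L0 s) ->
  List.In e (laws_library P FW nodeOf Nmin fit update_on_hits L0 (rcons s x)).
Proof.
rewrite /laws_library foldl_rcons; case: (foldl _ _ s) => L obs /= Le.
rewrite /laws_step; case: ifP => _ //; case: ifP => _ //=.
by rewrite -cats1; apply: List.in_or_app; left.
Qed.

Local Close Scope ereal_scope.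
Local Close Scope classical_set_scope.

Theorem mainTheorem4 (V : finType) (R : realType)
    (P : seq V -> R) (FW : seq V -> 'rV[R]_#|V|)
    (nodeOf : seq V -> seq V) (Nmin : nat)
    (fit : seq V -> seq (seq V * 'rV[R]_#|V|) -> expert V R)
    (update_on_hits : bool) (L0 : seq (expert V R)) :
  is_distr P ->
  (forall x, prefix (nodeOf x) x) ->
  (forall e, List.In e L0 -> 0 < etau e) ->
  (forall n obs, signpost (fit n obs) = n /\ 0 < etau (fit n obs)) ->
  forall n : nat, (1 <= n)%N ->
    (expected_hit_rate P FW nodeOf Nmin fit update_on_hits L0 n
       <= expected_hit_rate P FW nodeOf Nmin fit update_on_hits L0 n.+1)%E /\
    (expected_hit_rate P FW nodeOf Nmin fit update_on_hits L0 n <= 1)%E.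
Proof.
move=> P_distr _ _ _ n _; have [P_ge0 P_sum1] := P_distr.
set library := laws_library P FW nodeOf Nmin fit update_on_hits L0.
have hit01 s : (0 <= hit_rate P (library s) <= 1)%E.
  by rewrite hit_rate_ge0 ?hit_rate_le1.
split; first apply: iid_expect_le_append => // s x.
  exact/le_hit_rate/laws_library_rcons.
exact: iid_expect_le1.
Qed.
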